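(* Let $(X,d,\preccurlyeq)$ be a preordered $s$-regular $b$-metric space and let $\mathcal F=\{f_\alpha\}_{\alpha\in\mathcal I}$, $\mathcal G=\{g_\alpha\}_{\alpha\in\mathcal I}$ ($\mathcal I$ nonempty) be families of self mappings of $X$. Suppose that for each $\alpha\in\mathcal I$ there are mappings $H_{t,\alpha}:X\to X$, $0\le t\le n$, with $$f_\alpha=H_{0,\alpha}\preccurlyeq H_{1,\alpha}\succcurlyeq H_{2,\alpha}\preccurlyeq\cdots\succcurlyeq H_{n,\alpha}=g_\alpha,$$ and write $\mathcal H_t=\{H_{t,\alpha}\}_{\alpha\in\mathcal I}$. Suppose $x_0\in\mathrm{ComFix}(\mathcal F)$ and: (i) for each $t$, $1\le t\le n$, the family $\mathcal H_t$ is concordantly isotone; (ii) for each odd $t$, $1\le t\le n$, for every chain $C\in\mathcal C^*_1(\mathcal H_t,\preccurlyeq)$ there exists $w\in X$ which is a common upper bound of the chains $H_{t,\alpha}(C)$, $\alpha\in\mathcal I$, and there exist $z\in X$, $\beta\in\mathcal I$ such that for all $\alpha\in\mathcal I$ and $i\in\mathbb N$, $H_{t,\alpha}(w)\succcurlyeq w\succcurlyeq H^i_{t,\beta}(z)$, and $d(H^i_{t,\alpha}(w),H^i_{t,\beta}(z))\to0$ as $i\to\infty$; (iii) for each even $t$, $1\le t\le n$, for every chain $C\in\mathcal C_1(\mathcal H_t,\preccurlyeq)$ there exists $w'\in X$ which is a common lower bound of the chains $H_{t,\alpha}(C)$, $\alpha\in\mathcal I$, and there exist $z'\in X$, $\gamma\in\mathcal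 I$ such that for all $\alpha\in\mathcal I$ and $i\in\mathbb N$, $H_{t,\alpha}(w')\preccurlyeq w'\preccurlyeq H^i_{t,\gamma}(z')$, and $d(H^i_{t,\alpha}(w'),H^i_{t,\gamma}(z'))\to0$ as $i\to\infty$. Then there exists a fence $x_0\preccurlyeq x_1\succcurlyeq x_2\preccurlyeq\cdots\succcurlyeq x_n$ such that for each odd $t$, $x_t\in\mathrm{ComFix}(\mathcal H_t)\cap O^*_X(x_{t-1})$ and $x_t$ is a maximal element of that set, and for each even $t$, $x_t\in\mathrm{ComFix}(\mathcal H_t)\cap O_X(x_{t-1})$ and $x_t$ is a minimal element of that set.
   Context: A $b$-metric space with coefficient $s\ge 1$ is a nonempty set $X$ with $d:X\times X\to[0,\infty)$ such that for all $x,y,z$: $d(x,y)=0$ iff $x=y$; $d(x,y)=d(y,x)$; $d(x,y)\le s[d(x,z)+d(z,y)]$. A preorder is a reflexive transitive relation $\preccurlyeq$; $x\succcurlyeq y$ means $y\preccurlyeq x$; $x\prec y$ means $x\preccurlyeq y$ and $x\ne y$. A preordered $s$-regular $b$-metric space $(X,d,\preccurlyeq)$ is a $b$-metric space with coefficient $s$ with a preorder such that $x\preccurlyeq y\preccurlyeq z$ implies $\max\{d(x,y),d(y,z)\}\le s^2d(x,z)$. For maps $F,G$, $F\preccurlyeq G$ means $F(x)\preccurlyeq G(x)$ for all $x$. A chain is a subset any two elements of which are comparable. $f^i$ is the $i$-th iterate. A family $\{f_\alpha\}_{\alpha\in\mathcal I}$ of self maps is concordantly isotone if for all $x,y$, $x\prec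 y$ implies $f_\alpha(x)\preccurlyeq f_\beta(y)$ for all $\alpha,\beta\in\mathcal I$. $O_X(x_0)=\{x:x\preccurlyeq x_0\}$, $O^*_X(x_0)=\{x:x\succcurlyeq x_0\}$. For a family $\mathcal F=\{f_\alpha\}$: $\mathcal C_1(\mathcal F,\preccurlyeq)$ is the set of chains $C\subset\bigcup_\alpha f_\alpha(X)$ with $f_\alpha(x)\preccurlyeq x$ for all $x\in C,\alpha$, and $x\prec y$ in $C$ implies $x\preccurlyeq f_\alpha(y)$ for all $\alpha$; $\mathcal C^*_1(\mathcal F,\preccurlyeq)$ is the set of chains $C\subset\bigcup_\alpha f_\alpha(X)$ with $f_\alpha(x)\succcurlyeq x$ for all $x\in C,\alpha$, and $x\prec y$ in $C$ implies $f_\alpha(x)\preccurlyeq y$ for all $\alpha$. $\mathrm{ComFix}(\mathcal F)=\{x:f_\alpha(x)=x\ \forall\alpha\}$. A common upper (lower) bound of the sets $H_{t,\alpha}(C)$ is $w$ with $H_{t,\alpha}(x)\preccurlyeq w$ ($w\preccurlyeq H_{t,\alpha}(x)$) for all $x\in C$, $\alpha\in\mathcal I$. A minimal (maximal) element of $A$ is $w\in A$ with no $u\in A$ such that $u\prec w$ ($w\prec u$). *)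

From Stdlib Require Import Reals.
Open Scope R_scope.

Section Defs.
Context {X : Type}.

Definition b_metric (s : R) (d : X -> X -> R) : Prop :=
  1 <= s /\
  (forall x y, 0 <= d x y) /\
  (forall x y, d x y = 0 <-> x = y) /\
  (forall x y, d x y = d y x) /\
  (forall x y z, d x y <= s * (d x z + d z y)).

Definition preorder (le : X -> X -> Prop) : Prop :=
  (forall x, le x x) /\ (forall x y z, le x y -> le y z -> le x z).

Definition plt (le : X -> X -> Prop) (x y : X) : Prop := le x y /\ x <> y.

Definition preordered_s_regular_bmetric (s : R) (d : X -> X -> R)
  (le : X -> X -> Prop) : Prop :=
  b_metric s d /\ preorder le /\
  (forall x y z, le x y -> le y z -> Rmax (d x y) (d y z) <= s ^ 2 * d x z).

Fixpoint iterate (i : nat) (f : X -> X) (x : X) : X :=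
  match i with O => x | S j => f (iterate j f x) end.

Definition is_chain (le : X -> X -> Prop) (C : X -> Prop) : Prop :=
  forall x y, C x -> C y -> le x y \/ le y x.

Definition concordantly_isotone {I : Type} (le : X -> X -> Prop)
  (f : I -> X -> X) : Prop :=
  forall x y, plt le x y -> forall a b, le (f a x) (f b y).

Definition in_union_images {I : Type} (f : I -> X -> X) (x : X) : Prop :=
  exists a y, x = f a y.

Definition chainC1 {I : Type} (le : X -> X -> Prop) (f : I -> X -> X)
  (C : X -> Prop) : Prop :=
  is_chain le C /\ (forall x, C x -> in_union_images f x) /\
  (forall x a, C x -> le (f a x) x) /\
  (forall x y, C x -> C y -> plt le x y -> forall a, le x (f a y)).

Definition chainC1star {I : Type} (le : X -> X -> Prop) (f : I -> X -> X)
  (C : X -> Prop) : Prop :=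
  is_chain le C /\ (forall x, C x -> in_union_images f x) /\
  (forall x a, C x -> le x (f a x)) /\
  (forall x y, C x -> C y -> plt le x y -> forall a, le (f a x) y).

Definition ComFix {I : Type} (f : I -> X -> X) (x : X) : Prop :=
  forall a, f a x = x.

Definition O_X (le : X -> X -> Prop) (x0 x : X) : Prop := le x x0.
Definition O_X_star (le : X -> X -> Prop) (x0 x : X) : Prop := le x0 x.

Definition maximal_in (le : X -> X -> Prop) (A : X -> Prop) (w : X) : Prop :=
  A w /\ ~ (exists u, A u /\ plt le w u).
Definition minimal_in (le : X -> X -> Prop) (A : X -> Prop) (w : X) : Prop :=
  A w /\ ~ (exists u, A u /\ plt le u w).

End Defs.

(** A common fixed point [p] of the family [H_(t-1)] satisfies [p <= H_(t,a) p] for all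
    [a], and concordant isotonicity makes every chain of common fixed points of [H_t]
    above [p], enlarged by the point [H_(t,a) p], a chain of [C^*_1(H_t)].  Its upper
    bound [w] from (ii) is a common fixed point, because the [s]-regularity bounds
    [d(w, H_(t,a) w)] by [s^4 d(H^i_(t,a) w, H^i_(t,b) z)], which tends to [0].  The
    regularity also makes the preorder antisymmetric, so Zorn's lemma yields a maximal
    common fixed point above [p].  Reversing the order gives the minimal ones needed at
    even steps, and the fence is built one step at a time. *)

From Stdlib Require Import Reals Lia ProofIrrelevance Classical Program.Basics.
From mathcomp Require classical_sets boolp.
Open Scope R_scope.

Lemma Rle_0_of_bounded_by_Un_cv_0 (e c : R) (u : nat -> R) :
  Un_cv u 0 -> (forall i, e <= c * u (S i)) -> e <= 0.
Proof.
  intros Hu He.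
  rewrite <- (Rmult_0_r c).
  apply (Rle_cv_lim (Un := fun _ => e) (Vn := fun i => c * u (i + 1)%nat)).
  - intro i. rewrite Nat.add_1_r. apply He.
  - intros eps Heps. exists 0%nat. intros. rewrite R_dist_eq. exact Heps.
  - apply CV_mult.
    + intros eps Heps. exists 0%nat. intros. rewrite R_dist_eq. exact Heps.
    + exact (CV_shift' u 1 0 Hu).
Qed.

Lemma Zorn_maximal_in {X : Type} (le : X -> X -> Prop) (A : X -> Prop) :
  preorder le -> (forall x y, le x y -> le y x -> x = y) ->
  (forall C, (forall x, C x -> A x) -> is_chain le C ->
     exists w, A w /\ forall x, C x -> le x w) ->
  exists w, maximal_in le A w.
Proof.
  intros [Hrefl Htrans] Hanti Hub.
  set (T := {x : X | A x}).
  set (R := fun u v : T => boolp.asbool (le (proj1_sig u) (proj1_sig v))).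
  destruct (@classical_sets.Zorn T R) as [[w Aw] Hw].
  - intro u. apply boolp.asboolT, Hrefl.
  - intros u v t Huv Hvt. apply boolp.asboolW in Huv, Hvt.
    apply boolp.asboolT. eapply Htrans; eassumption.
  - intros [u Au] [v Av] Huv Hvu. apply boolp.asboolW in Huv, Hvu. simpl in *.
    destruct (Hanti u v Huv Hvu). f_equal. apply proof_irrelevance.
  - intros CT HCT.
    destruct (Hub (fun x => exists u, CT u /\ proj1_sig u = x)) as [w [Aw Hw]].
    + intros x [[u Au] [_ <-]]. exact Au.
    + intros x y [u [Cu <-]] [v [Cv <-]].
      destruct (HCT u v Cu Cv) as [Huv|Hvu]; [left|right]; apply boolp.asboolW; assumption.
    + exists (exist _ w Aw). intros u Cu. apply boolp.asboolT. apply Hw. exists u. auto.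
  - exists w. split; [exact Aw|]. intros [u [Au [Hwu Hne]]].
    specialize (Hw (exist _ u Au) (boolp.asboolT Hwu)).
    apply (f_equal (@proj1_sig _ _)) in Hw. simpl in Hw. congruence.
Qed.

Section RegularBMetricSpace.
Context {X : Type} (s : R) (d : X -> X -> R) (le : X -> X -> Prop).
Hypothesis Hsp : preordered_s_regular_bmetric s d le.

Lemma pre_refl x : le x x.
Proof. apply Hsp. Qed.

Lemma pre_trans x y z : le x y -> le y z -> le x z.
Proof. apply Hsp. Qed.

Lemma bdist_ge0 x y : 0 <= d x y.
Proof. apply Hsp. Qed.

Lemma bdist_eq0 x y : d x y = 0 <-> x = y.
Proof. apply Hsp. Qed.

Lemma bdist_sym x y : d x y = d y x.
Proof. apply Hsp. Qed.

Lemma bregular_l x y z : le x y -> le y z -> d x y <= s ^ 2 * d x z.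
Proof. intros Hxy Hyz. eapply Rle_trans; [apply Rmax_l | apply Hsp; assumption]. Qed.

Lemma bregular_r x y z : le x y -> le y z -> d y z <= s ^ 2 * d x z.
Proof. intros Hxy Hyz. eapply Rle_trans; [apply Rmax_r | apply Hsp; assumption]. Qed.

Lemma pre_antisym x y : le x y -> le y x -> x = y.
Proof.
  intros Hxy Hyx. apply bdist_eq0.
  pose proof (bregular_l x y x Hxy Hyx) as Hreg.
  rewrite (proj2 (bdist_eq0 x x) eq_refl), Rmult_0_r in Hreg.
  apply Rle_antisym; [exact Hreg | apply bdist_ge0].
Qed.

Lemma preordered_s_regular_bmetric_flip :
  preordered_s_regular_bmetric s d (flip le).
Proof.
  split; [apply Hsp|split].
  - split; [exact pre_refl|]. intros x y z Hxy Hyz. exact (pre_trans z y x Hyz Hxy).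
  - intros x y z Hxy Hyz. unfold flip in *.
    rewrite Rmax_comm, (bdist_sym x y), (bdist_sym y z), (bdist_sym x z).
    apply Hsp; assumption.
Qed.

Section ConcordantlyIsotone.
Context {I : Type} (K : I -> X -> X).
Hypothesis Kiso : concordantly_isotone le K.

Lemma le_ComFix_image x u a : ComFix K u -> le x u -> le (K a x) u.
Proof.
  intros Hu Hxu. destruct (classic (x = u)) as [<-|Hne].
  - rewrite Hu. apply pre_refl.
  - rewrite <- (Hu a). apply Kiso. split; assumption.
Qed.

Lemma le_image_image x a b : (forall c, le x (K c x)) -> le (K a x) (K b (K a x)).
Proof.
  intros Hx. destruct (classic (x = K a x)) as [E|Hne].
  - rewrite <- E. apply Hx.
  - apply Kiso. split; [apply Hx | exact Hne].
Qed.

Lemma iterate_le_image w a i b : (forall c, le w (K c w)) ->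
  le (iterate i (K a) w) (K b (iterate i (K a) w)).
Proof.
  intros Hw. revert b. induction i as [|i IH]; intro b; simpl.
  - apply Hw.
  - apply le_image_image, IH.
Qed.

Lemma iterate_mono w a i j : (forall c, le w (K c w)) -> (i <= j)%nat ->
  le (iterate i (K a) w) (iterate j (K a) w).
Proof.
  intros Hw Hij. induction Hij as [|j _ IH].
  - apply pre_refl.
  - eapply pre_trans; [exact IH | apply iterate_le_image, Hw].
Qed.

Lemma ComFix_of_orbit_cv w z beta :
  (forall a i, le w (K a w) /\ le (iterate i (K beta) z) w) ->
  (forall a, Un_cv (fun i => d (iterate i (K a) w) (iterate i (K beta) z)) 0) ->
  ComFix K w.
Proof.
  intros Hb Hcv a.
  assert (Hw : forall c, le w (K c w)) by (intro c; apply (Hb c 0%nat)).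
  symmetry. apply bdist_eq0, Rle_antisym; [|apply bdist_ge0].
  apply (Rle_0_of_bounded_by_Un_cv_0 _ (s ^ 2 * s ^ 2) _ (Hcv a)). intro i.
  assert (Hs : 0 <= s ^ 2) by apply pow2_ge_0.
  eapply Rle_trans.
  - apply (bregular_l w (K a w) (iterate (S i) (K a) w)); [apply Hw|].
    apply (iterate_mono w a 1 (S i) Hw). lia.
  - rewrite Rmult_assoc. apply Rmult_le_compat_l; [exact Hs|].
    rewrite (bdist_sym (iterate (S i) (K a) w)).
    apply bregular_r; [apply (Hb a (S i))|].
    apply (iterate_mono w a 0 (S i) Hw). lia.
Qed.

Section MaximalAbove.
Context (P : I -> X -> X) (p : X).
Hypothesis Hpfix : ComFix P p.
Hypothesis HPK : forall a x, le (P a x) (K a x).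

Lemma le_image_of_ComFix_below a : le p (K a p).
Proof. rewrite <- (Hpfix a) at 1. apply HPK. Qed.

Lemma chainC1star_cons_image a0 (A : X -> Prop) :
  (forall y, A y -> ComFix K y /\ le p y) -> is_chain le A ->
  chainC1star le K (fun x => x = K a0 p \/ A x).
Proof.
  intros HA Hch.
  assert (Hc : forall y, A y -> le (K a0 p) y).
  { intros y Ay. apply le_ComFix_image; apply HA, Ay. }
  split; [|split; [|split]].
  - intros x y [->|Ax] [->|Ay]; auto using pre_refl.
  - intros x [->|Ax].
    + exists a0, p. reflexivity.
    + exists a0, x. symmetry. apply HA, Ax.
  - intros x a [->|Ax].
    + apply le_image_image, le_image_of_ComFix_below.
    + rewrite (proj1 (HA x Ax)). apply pre_refl.
  - intros x y Cx [->|Ay] [Hxy Hne] a.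
    + destruct Cx as [->|Ax]; [contradiction|].
      rewrite (proj1 (HA x Ax)). exact Hxy.
    + apply le_ComFix_image; [apply HA, Ay | exact Hxy].
Qed.

Hypothesis Hinh : inhabited I.
Hypothesis Hub : forall C, chainC1star le K C ->
  exists w,
    (forall a x, C x -> le (K a x) w) /\
    exists z beta,
      (forall a i, le w (K a w) /\ le (iterate i (K beta) z) w) /\
      (forall a, Un_cv (fun i => d (iterate i (K a) w) (iterate i (K beta) z)) 0).

Lemma exists_maximal_ComFix_above :
  exists y, maximal_in le (fun y => ComFix K y /\ O_X_star le p y) y.
Proof.
  destruct Hinh as [a0].
  apply Zorn_maximal_in; [apply Hsp | exact pre_antisym|].
  intros A HA Hch.
  destruct (Hub _ (chainC1star_cons_image a0 A HA Hch)) as [w [Hw [z [beta [Hb Hcv]]]]].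
  exists w. split; [split|].
  - exact (ComFix_of_orbit_cv w z beta Hb Hcv).
  - apply (pre_trans _ (K a0 p)); [apply le_image_of_ComFix_below|].
    apply (pre_trans _ (K a0 (K a0 p))); [apply le_image_image, le_image_of_ComFix_below|].
    apply Hw. left. reflexivity.
  - intros y Ay. rewrite <- (proj1 (HA y Ay) a0). apply Hw. right. exact Ay.
Qed.

End MaximalAbove.
End ConcordantlyIsotone.
End RegularBMetricSpace.

Lemma concordantly_isotone_flip {X I : Type} (le : X -> X -> Prop) (K : I -> X -> X) :
  concordantly_isotone le K -> concordantly_isotone (flip le) K.
Proof. intros Kiso x y [Hyx Hne] a b. apply Kiso. split; auto. Qed.

Lemma chainC1_of_chainC1star_flip {X I : Type} (le : X -> X -> Prop) (K : I -> X -> X) C :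
  chainC1star (flip le) K C -> chainC1 le K C.
Proof.
  intros [Hch [Him [Hle Hplt]]]. split; [|split; [exact Him|split; [exact Hle|]]].
  - intros x y Cx Cy. destruct (Hch x y Cx Cy); auto.
  - intros x y Cx Cy [Hxy Hne]. apply (Hplt y x Cy Cx). split; auto.
Qed.

Lemma minimal_in_of_maximal_in_flip {X : Type} (le : X -> X -> Prop) A (w : X) :
  maximal_in (flip le) A w -> minimal_in le A w.
Proof.
  intros [Aw Hmax]. split; [exact Aw|].
  intros [u [Au [Huw Hne]]]. apply Hmax. exists u. split; [exact Au|]. split; auto.
Qed.

Lemma exists_minimal_ComFix_below {X I : Type} (s : R) (d : X -> X -> R)
  (le : X -> X -> Prop) (K P : I -> X -> X) (p : X) :
  preordered_s_regular_bmetric s d le -> concordantly_isotone le K ->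
  ComFix P p -> (forall a x, le (K a x) (P a x)) -> inhabited I ->
  (forall C, chainC1 le K C ->
     exists w',
       (forall a x, C x -> le w' (K a x)) /\
       exists z' gamma,
         (forall a i, le (K a w') w' /\ le w' (iterate i (K gamma) z')) /\
         (forall a, Un_cv (fun i => d (iterate i (K a) w') (iterate i (K gamma) z')) 0)) ->
  exists y, minimal_in le (fun y => ComFix K y /\ O_X le p y) y.
Proof.
  intros Hsp Kiso Hpfix HKP Hinh Hlb.
  destruct (exists_maximal_ComFix_above s d (flip le)
              (preordered_s_regular_bmetric_flip s d le Hsp)
              K (concordantly_isotone_flip le K Kiso) P p Hpfix HKP Hinh)
    as [y Hy].
  - intros C HC. exact (Hlb C (chainC1_of_chainC1star_flip le K C HC)).
  - exists y. exact (minimal_in_of_maximal_in_flip _ _ _ Hy).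
Qed.

Definition fence_link {X I : Type} (le : X -> X -> Prop) (H : nat -> I -> X -> X)
  (t : nat) (p y : X) : Prop :=
  (Nat.odd t = true ->
     le p y /\ maximal_in le (fun y => ComFix (H t) y /\ O_X_star le p y) y) /\
  (Nat.even t = true ->
     le y p /\ minimal_in le (fun y => ComFix (H t) y /\ O_X le p y) y).

Section Fence.
Context {X I : Type} (s : R) (d : X -> X -> R) (le : X -> X -> Prop).
Context (n : nat) (H : nat -> I -> X -> X) (x0 : X).
Hypothesis Hsp : preordered_s_regular_bmetric s d le.
Hypothesis Hinh : inhabited I.
Hypothesis Hfence : forall t a x, (t < n)%nat ->
  (Nat.even t = true -> le (H t a x) (H (S t) a x)) /\
  (Nat.odd t = true -> le (H (S t) a x) (H t a x)).
Hypothesis Hx0 : ComFix (H 0%nat) x0.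
Hypothesis Hiso : forall t, (1 <= t <= n)%nat -> concordantly_isotone le (H t).
Hypothesis Hodd : forall t, (1 <= t <= n)%nat -> Nat.odd t = true ->
  forall C, chainC1star le (H t) C ->
  exists w,
    (forall a x, C x -> le (H t a x) w) /\
    exists z beta,
      (forall a i, le w (H t a w) /\ le (iterate i (H t beta) z) w) /\
      (forall a, Un_cv (fun i => d (iterate i (H t a) w) (iterate i (H t beta) z)) 0).
Hypothesis Heven : forall t, (1 <= t <= n)%nat -> Nat.even t = true ->
  forall C, chainC1 le (H t) C ->
  exists w',
    (forall a x, C x -> le w' (H t a x)) /\
    exists z' gamma,
      (forall a i, le (H t a w') w' /\ le w' (iterate i (H t gamma) z')) /\
      (forall a, Un_cv (fun i => d (iterate i (H t a) w') (iterate i (H t gamma) z')) 0).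

Lemma fence_link_next k p : (k < n)%nat -> ComFix (H k) p ->
  exists y, ComFix (H (S k)) y /\ fence_link le H (S k) p y.
Proof.
  intros Hk Hp. unfold fence_link, Nat.odd.
  destruct (Nat.even (S k)) eqn:Ev; simpl.
  - assert (Ok : Nat.odd k = true) by (rewrite <- Nat.even_succ; exact Ev).
    destruct (exists_minimal_ComFix_below s d le (H (S k)) (H k) p Hsp
                (Hiso (S k) ltac:(lia)) Hp (fun a x => proj2 (Hfence k a x Hk) Ok)
                Hinh (Heven (S k) ltac:(lia) Ev)) as [y [[Hfix Hyp] Hmin]].
    exists y. split; [exact Hfix|]. split; [discriminate|].
    intros _. split; [exact Hyp|]. split; [split; assumption | exact Hmin].
  - assert (Ek : Nat.even k = true).
    { rewrite <- Nat.odd_succ. unfold Nat.odd. rewrite Ev. reflexivity. }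
    destruct (exists_maximal_ComFix_above s d le Hsp (H (S k)) (Hiso (S k) ltac:(lia))
                (H k) p Hp (fun a x => proj1 (Hfence k a x Hk) Ek) Hinh
                (Hodd (S k) ltac:(lia) ltac:(unfold Nat.odd; rewrite Ev; reflexivity)))
      as [y [[Hfix Hpy] Hmax]].
    exists y. split; [exact Hfix|]. split; [|discriminate].
    intros _. split; [exact Hpy|]. split; [split; assumption | exact Hmax].
Qed.

Lemma fence_exists k : (k <= n)%nat ->
  exists x : nat -> X, x 0%nat = x0 /\ ComFix (H k) (x k) /\
    forall t, (1 <= t <= k)%nat -> fence_link le H t (x (pred t)) (x t).
Proof.
  induction k as [|k IH]; intros Hk.
  - exists (fun _ => x0). split; [reflexivity|]. split; [exact Hx0|]. intros t Ht. lia.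
  - destruct (IH ltac:(lia)) as [x [Hx_0 [Hxk Hlinks]]].
    destruct (fence_link_next k (x k) ltac:(lia) Hxk) as [y [Hy Hlink]].
    exists (fun t => if Nat.eqb t (S k) then y else x t).
    rewrite Nat.eqb_refl. split; [exact Hx_0|]. split; [exact Hy|].
    intros t Ht. destruct (Nat.eq_dec t (S k)) as [->|Hne].
    + rewrite Nat.eqb_refl. simpl pred.
      replace (Nat.eqb k (S k)) with false by (symmetry; apply Nat.eqb_neq; lia).
      exact Hlink.
    + replace (Nat.eqb t (S k)) with false by (symmetry; apply Nat.eqb_neq; lia).
      replace (Nat.eqb (pred t) (S k)) with false by (symmetry; apply Nat.eqb_neq; lia).
      apply Hlinks. lia.
Qed.

End Fence.

Theorem theorem3p3 (X : Type) (s : R) (d : X -> X -> R) (le : X -> X -> Prop)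
  (I : Type) (F G : I -> X -> X) (n : nat) (H : nat -> I -> X -> X) (x0 : X) :
  preordered_s_regular_bmetric s d le ->
  inhabited I ->
  (* f_alpha = H_{0,alpha}, H_{n,alpha} = g_alpha *)
  (forall a, H 0%nat a = F a) ->
  (forall a, H n a = G a) ->
  (* the fence H_0 <= H_1 >= H_2 <= ... >= H_n *)
  (forall t a x, (t < n)%nat ->
     (Nat.even t = true -> le (H t a x) (H (S t) a x)) /\
     (Nat.odd t = true -> le (H (S t) a x) (H t a x))) ->
  ComFix F x0 ->
  (* (i) *)
  (forall t, (1 <= t <= n)%nat -> concordantly_isotone le (H t)) ->
  (* (ii) *)
  (forall t, (1 <= t <= n)%nat -> Nat.odd t = true ->
     forall C, chainC1star le (H t) C ->
     exists w,
       (forall a x, C x -> le (H t a x) w) /\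
       exists z beta,
         (forall a i, le w (H t a w) /\ le (iterate i (H t beta) z) w) /\
         (forall a, Un_cv (fun i => d (iterate i (H t a) w)
                                      (iterate i (H t beta) z)) 0)) ->
  (* (iii) *)
  (forall t, (1 <= t <= n)%nat -> Nat.even t = true ->
     forall C, chainC1 le (H t) C ->
     exists w',
       (forall a x, C x -> le w' (H t a x)) /\
       exists z' gamma,
         (forall a i, le (H t a w') w' /\ le w' (iterate i (H t gamma) z')) /\
         (forall a, Un_cv (fun i => d (iterate i (H t a) w')
                                      (iterate i (H t gamma) z')) 0)) ->
  exists x : nat -> X,
    x 0%nat = x0 /\
    forall t, (1 <= t <= n)%nat ->
      (Nat.odd t = true ->
         le (x (pred t)) (x t) /\
         maximal_in le (fun y => ComFix (H t) y /\ O_X_star le (x (pred t)) y) (x t)) /\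
      (Nat.even t = true ->
         le (x t) (x (pred t)) /\
         minimal_in le (fun y => ComFix (H t) y /\ O_X le (x (pred t)) y) (x t)).
Proof.
  intros Hsp Hinh HF _ Hfence Hx0 Hiso Hodd Heven.
  assert (Hx0H : ComFix (H 0%nat) x0) by (intro a; rewrite HF; apply Hx0).
  destruct (fence_exists s d le n H x0 Hsp Hinh Hfence Hx0H Hiso Hodd Heven n (le_n n))
    as [x [Hx [_ Hlinks]]].
  exists x. split; [exact Hx | exact Hlinks].
Qed.
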